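(* Let $G=(V,E)$ be a connected simple graph and let $R_{u,v}$ denote the effective resistance between $u$ and $v$ in the network $\mathcal{N}_G$. Then for every edge $uv\in E$, $$R_{u,v}\le \frac{1}{\tfrac12|N(u)\cap N(v)|+1}.$$ Moreover, if some biconnected component of $G$ is not a clique, then there is an edge $uv\in E$ for which this inequality is strict.
   Context: $\mathcal{N}_G$ is the electrical network on vertex set $V$ in which every edge of $G$ is a resistor of resistance $1$; the effective resistance $R_{u,v}$ is the voltage difference between $u$ and $v$ when a unit current is injected at $u$ and extracted at $v$. $N(u)=\{v\in V: uv\in E\}$ is the open neighbourhood of $u$. A biconnected component (block) of $G$ is a maximal connected subgraph of $G$ that has no cut vertex of its own. *)

(* Graph: symmetric irreflexive relation on a finType. *)
From HB Require Import structures.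
From mathcomp Require Import all_boot all_order all_algebra.
From Stdlib Require Import ClassicalEpsilon.
Set Implicit Arguments. Unset Strict Implicit. Unset Printing Implicit Defensive.
Import Order.TTheory GRing.Theory Num.Theory.

Section Graphs.
Variable T : finType.
Variable e : rel T.

Definition graph_connected : Prop := forall x y : T, connect e x y.

Definition nbhd (u : T) : {set T} := [set w | e u w].

Definition induced_rel (S : {set T}) : rel T :=
  [rel x y | [&& e x y, x \in S & y \in S]].

Definition connected_on (S : {set T}) : Prop :=
  forall x y, x \in S -> y \in S -> connect (induced_rel S) x y.

Definition biconnected_set (S : {set T}) : Prop :=
  [/\ S != set0, connected_on S & forall z, z \in S -> connected_on (S :\ z)].

(* S is the vertex set of a biconnected component (block) of G.
   Blocks (maximal subgraphs without cut vertex) are induced subgraphs,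
   so they are determined by their vertex sets. *)
Definition is_block (S : {set T}) : Prop :=
  biconnected_set S /\
  forall S' : {set T}, S \subset S' -> biconnected_set S' -> S' = S.

Definition is_clique (S : {set T}) : Prop :=
  forall x y, x \in S -> y \in S -> x != y -> e x y.

Variable R : realFieldType.
Local Open Scope ring_scope.

(* p is a node potential in the unit-resistance network N_G when a unit
   current is injected at u and extracted at v (Kirchhoff's current law;
   current on edge xy is p x - p y). *)
Definition unit_potential (u v : T) (p : T -> R) : Prop :=
  forall x : T,
    \sum_(y | e x y) (p x - p y) = (x == u)%:R - (x == v)%:R.

(* effective resistance R_{u,v}: voltage difference p u - p v
   (well defined for connected G: potentials are unique up to constants) *)
Definition eff_res (u v : T) : R :=
  epsilon (inhabits 0)
    (fun r => exists p : T -> R, unit_potential u v p /\ r = p u - p v).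

End Graphs.

From HB Require Import structures.
From mathcomp Require Import all_boot all_order all_algebra.
From mathcomp Require Import ring lra.
From Stdlib Require Import ClassicalEpsilon Classical.
Import Order.TTheory GRing.Theory Num.Theory.
Local Open Scope ring_scope.
Set Implicit Arguments. Unset Strict Implicit. Unset Printing Implicit Defensive.

(** By Thomson's principle, twice the effective resistance [R_uv] is the
    least energy (summed over ordered pairs) of a unit [u]-[v] flow, and the
    electrical current is the only flow attaining it. Sending [a] along [uv]
    and [a/2] along each path [u w v] through a common neighbour [w], with
    [a = 1 / (|N(u) :&: N(v)| / 2 + 1)], is a unit flow of energy [2 a]: this
    gives the bound. In a block that is not a clique there is an induced path
    [x u v] together with an [x]-[v] path avoiding [u]. The flow above only
    uses edges between [u], [v] and common neighbours, so a potential for it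
    would keep its value at [u] from [x] along that path up to the first vertex
    that is [v] or a common neighbour, where it must have dropped by [a] or
    [a/2]. So it is not the current, and the bound is strict. *)

Lemma connect_cross (T : finType) (r : rel T) (P : pred T) x y :
  connect r x y -> P x -> ~~ P y -> exists a b, [/\ r a b, P a & ~~ P b].
Proof.
case/connectP=> s; elim: s x => [|z s IH] x /=; first by move=> _ -> ->.
case/andP=> rxz pzs ylast Px nPy.
case Pz: (P z); first exact: IH pzs ylast Pz nPy.
by exists x, z; rewrite rxz Px Pz.
Qed.

Section Blocks.
Variables (T : finType) (e : rel T).
Hypotheses (e_sym : symmetric e) (e_irr : irreflexive e).

Lemma nonclique_pair (S : {set T}) : ~ is_clique e S ->
  exists x y, [/\ x \in S, y \in S, x != y & ~~ e x y].
Proof.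
move=> ncl; apply: NNPP => none; apply: ncl => x y xS yS xy.
by apply/negPn/negP => nexy; apply: none; exists x, y.
Qed.

(* Walk in [S] from [x] to a non-neighbour: the first step leaving the closed
   neighbourhood of [x] gives [x u v]; since [u] is no cut vertex, [S :\ u]
   still joins [x] to [v]. *)
Lemma biconnected_nonclique_wedge (S : {set T}) :
  biconnected_set e S -> ~ is_clique e S ->
  exists u v x, [/\ e u v, e u x, x != v, ~~ e v x
                  & connect (induced_rel e (S :\ u)) x v].
Proof.
case=> _ S_conn S_cut /nonclique_pair [x [y [xS yS xy nexy]]].
have Px : (x == x) || e x x by rewrite eqxx.
have nPy : ~~ ((y == x) || e x y) by rewrite negb_or eq_sym xy nexy.
have [u [v [/and3P [euv uS vS] xu]]] :=
  connect_cross (P := fun z => (z == x) || e x z) (S_conn x y xS yS) Px nPy.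
rewrite negb_or => /andP [vx nexv].
have exu : e x u.
  by case/orP: xu => // /eqP ux; rewrite -ux euv in nexv.
exists u, v, x; split; rewrite ?(e_sym v) ?(e_sym u x) 1?eq_sym //.
apply: (S_cut u uS); rewrite in_setD1 ?xS ?vS andbT.
  by apply: contraTneq exu => ->; rewrite e_irr.
by apply: contraTneq euv => ->; rewrite e_irr.
Qed.

End Blocks.

Section Sums.
Variables (R : pzRingType) (T : finType).

Lemma sumr_mul_delta (F : T -> R) (z : T) : \sum_x F x * (x == z)%:R = F z.
Proof.
rewrite (bigD1 z) //= eqxx mulr1 big1 ?addr0 // => y /negbTE ->.
by rewrite mulr0.
Qed.

Lemma sumr_pred_delta (P : pred T) (z : T) :
  \sum_(y | P y) (y == z)%:R = (P z)%:R :> R.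
Proof.
rewrite big_mkcond (bigD1 z) //= eqxx big1 ?addr0; first by case: (P z).
by move=> y /negbTE ->; case: (P y).
Qed.

Lemma sumr_pred_indicator (P : pred T) (A : {set T}) :
  {subset A <= P} -> \sum_(y | P y) (y \in A)%:R = #|A|%:R :> R.
Proof.
move=> sAP; rewrite big_mkcond (eq_bigr (fun y => if y \in A then 1 else 0)).
  by rewrite -big_mkcond sumr_const.
move=> y _; case Ay: (y \in A); last by case: (P y).
by have -> : P y := sAP y Ay.
Qed.

Lemma sumr_mul_source_sink (q : T -> R) (u v : T) :
  \sum_x q x * ((x == u)%:R - (x == v)%:R) = q u - q v.
Proof.
under eq_bigr do rewrite mulrBr.
by rewrite sumrB !sumr_mul_delta.
Qed.

End Sums.

Section Network.
Variables (R : realFieldType) (T : finType) (e : rel T).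
Hypothesis e_sym : symmetric e.

Definition energy (f : T -> T -> R) : R := \sum_x \sum_(y | e x y) f x y ^+ 2.

Definition unit_flow (u v : T) (f : T -> T -> R) : Prop :=
  (forall x y, f y x = - f x y) /\
  (forall x, \sum_(y | e x y) f x y = (x == u)%:R - (x == v)%:R).

Lemma sum_edges_by_parts (q : T -> R) (h : T -> T -> R) :
  (forall x y, h y x = - h x y) ->
  \sum_x \sum_(y | e x y) (q x - q y) * h x y =
  2 * \sum_x q x * \sum_(y | e x y) h x y.
Proof.
move=> h_anti.
have swap : \sum_x \sum_(y | e x y) q y * h x y =
            - \sum_x q x * \sum_(y | e x y) h x y.
  rewrite (eq_bigr (fun x => \sum_y if e x y then q y * h x y else 0));
    last by move=> x _; rewrite big_mkcond.
  rewrite exchange_big /= -sumrN; apply: eq_bigr => y _.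
  rewrite mulr_sumr -sumrN [RHS]big_mkcond; apply: eq_bigr => x _.
  by rewrite e_sym; case: (e y x); rewrite ?oppr0 // h_anti mulrN.
have split_diff x : \sum_(y | e x y) (q x - q y) * h x y =
    q x * \sum_(y | e x y) h x y - \sum_(y | e x y) q y * h x y.
  by rewrite mulr_sumr -sumrB; apply: eq_bigr => y _; rewrite mulrBl.
by rewrite (eq_bigr _ (fun x _ => split_diff x)) sumrB swap; ring.
Qed.

Lemma sum_grad_mul_unit_flow u v f (q : T -> R) : unit_flow u v f ->
  \sum_x \sum_(y | e x y) (q x - q y) * f x y = 2 * (q u - q v).
Proof.
case=> f_anti f_div; rewrite sum_edges_by_parts //.
by under eq_bigr do rewrite f_div; rewrite sumr_mul_source_sink.
Qed.

Lemma grad_unit_flow u v (p : T -> R) :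
  unit_potential e u v p -> unit_flow u v (fun x y => p x - p y).
Proof. by move=> hp; split=> // x y; rewrite opprB. Qed.

Lemma energy_ge0 f : 0 <= energy f.
Proof. by apply: sumr_ge0 => x _; apply: sumr_ge0 => y _; apply: sqr_ge0. Qed.

Lemma energy_eq0 f : energy f = 0 -> forall x y, e x y -> f x y = 0.
Proof.
move=> E0 x y exy; apply/eqP; rewrite -sqrf_eq0; apply/eqP.
have rows0 := psumr_eq0P (fun x _ => sumr_ge0 _ (fun y _ => sqr_ge0 (f x y))) E0.
exact: (psumr_eq0P (fun y _ => sqr_ge0 (f x y)) (rows0 x isT)).
Qed.

(* Thomson's principle: [f - grad p] is a circulation, orthogonal to gradients. *)
Lemma energy_sub_grad u v f p : unit_flow u v f -> unit_potential e u v p ->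
  energy (fun x y => f x y - (p x - p y)) = energy f - 2 * (p u - p v).
Proof.
move=> hf hp.
have cross := sum_grad_mul_unit_flow p hf.
have self := sum_grad_mul_unit_flow p (grad_unit_flow hp).
have expand x : \sum_(y | e x y) (f x y - (p x - p y)) ^+ 2 =
    \sum_(y | e x y) f x y ^+ 2 - 2 * \sum_(y | e x y) (p x - p y) * f x y
    + \sum_(y | e x y) (p x - p y) * (p x - p y).
  by rewrite mulr_sumr -sumrB -big_split /=; apply: eq_bigr => y _; ring.
rewrite /energy (eq_bigr _ (fun x _ => expand x)) big_split sumrB -mulr_sumr /=.
by rewrite cross self; ring.
Qed.

Lemma energy_grad_on_support u v f (q : T -> R) : unit_flow u v f ->
  (forall x y, e x y -> f x y = 0 \/ f x y = q x - q y) ->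
  energy f = 2 * (q u - q v).
Proof.
move=> hf supp; rewrite -(sum_grad_mul_unit_flow q hf) /energy.
apply: eq_bigr => x _; apply: eq_bigr => y exy.
by case: (supp x y exy) => ->; rewrite expr2 ?mul0r ?mulr0.
Qed.

Section Connected.
Hypothesis G_conn : graph_connected e.

Lemma harmonic_const (w : T -> R) :
  (forall x, \sum_(y | e x y) (w x - w y) = 0) -> forall a b, w a = w b.
Proof.
move=> harm.
have flat : energy (fun x y => w x - w y) = 0.
  transitivity (2 * \sum_x w x * \sum_(y | e x y) (w x - w y)).
    rewrite -sum_edges_by_parts => [|x y]; last by rewrite opprB.
    by apply: eq_bigr => x _; apply: eq_bigr => y _; rewrite expr2.
  by rewrite big1 ?mulr0 // => x _; rewrite harm mulr0.
move=> a b; apply/eqP; rewrite eq_sym; apply: contraT => nab.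
have [y [z [eyz /eqP wy nwz]]] :=
  connect_cross (P := fun z => w z == w a) (G_conn a b) (eqxx _) nab.
move/eqP: (energy_eq0 flat eyz); rewrite subr_eq0 wy eq_sym.
by rewrite (negbTE nwz).
Qed.

Definition laplacian (x y : T) : R := (x == y)%:R * (\sum_(z | e x z) 1) - (e x y)%:R.

Lemma laplacian_sym x y : laplacian x y = laplacian y x.
Proof. by rewrite /laplacian e_sym; have [->|nxy] := eqVneq x y; rewrite ?mul0r. Qed.

Lemma sum_laplacian_mul (w : T -> R) x :
  \sum_y laplacian x y * w y = \sum_(y | e x y) (w x - w y).
Proof.
rewrite (eq_bigr (fun y => (\sum_(z | e x z) 1) * w y * (y == x)%:R
                           - (e x y)%:R * w y)) => [|y _]; last first.
  by rewrite /laplacian (eq_sym x y); ring.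
rewrite sumrB sumr_mul_delta sumrB mulr_suml; congr (_ - _).
  by apply: eq_bigr => z _; rewrite mul1r.
rewrite [RHS]big_mkcond; apply: eq_bigr => y _.
by case: (e x y); rewrite ?mul1r ?mul0r.
Qed.

Lemma unit_potential_exists u v : exists p : T -> R, unit_potential e u v p.
Proof.
pose L : 'M[R]_#|T| := \matrix_(i, j) laplacian (enum_val i) (enum_val j).
pose b : 'rV[R]_#|T| := \row_j ((enum_val j == u)%:R - (enum_val j == v)%:R).
have sum_enum (F : T -> R) : \sum_x F x = \sum_(k < #|T|) F (enum_val k).
  rewrite (reindex (enum_val : 'I_#|T| -> T)) //.
  by apply: onW_bij; exact: enum_val_bij.
(* Each column of [cokermx L] is harmonic, hence constant, hence orthogonal to [b]. *)
have /submxP [D bDL] : (b <= L)%MS.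
  rewrite submxE; apply/eqP/matrixP => i j; rewrite !mxE.
  pose w (x : T) : R := cokermx L (enum_rank x) j.
  have harm x : \sum_(y | e x y) (w x - w y) = 0.
    have := congr1 (fun M : 'M[R]_#|T| => M (enum_rank x) j) (mulmx_coker L).
    rewrite !mxE => coker0; rewrite -[RHS]coker0 -(sum_laplacian_mul w) sum_enum.
    by apply: eq_bigr => k _; rewrite /w enum_valK [L _ _]mxE enum_rankK.
  rewrite (eq_bigr (fun k => w (enum_val k) *
             ((enum_val k == u)%:R - (enum_val k == v)%:R))) => [|k _]; last first.
    by rewrite /w enum_valK mxE mulrC.
  rewrite -(sum_enum (fun x => w x * ((x == u)%:R - (x == v)%:R))).
  by rewrite sumr_mul_source_sink (harmonic_const harm u v) subrr.
exists (fun x => D 0 (enum_rank x)) => x.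
have := congr1 (fun M : 'rV[R]_#|T| => M 0 (enum_rank x)) bDL.
rewrite !mxE enum_rankK => ->; rewrite -sum_laplacian_mul sum_enum.
by apply: eq_bigr => k _; rewrite mxE enum_valK enum_rankK laplacian_sym mulrC.
Qed.

Lemma eff_res_potential u v :
  exists2 p : T -> R, unit_potential e u v p & eff_res e R u v = p u - p v.
Proof.
have [p0 hp0] := unit_potential_exists u v.
have [p [hp hr]] := epsilon_spec (inhabits (0 : R))
  (fun r => exists p, unit_potential e u v p /\ r = p u - p v)
  (ex_intro _ _ (ex_intro _ p0 (conj hp0 erefl))).
by exists p.
Qed.

Lemma eff_res_le_energy u v f : unit_flow u v f -> 2 * eff_res e R u v <= energy f.
Proof.
move=> hf; have [p hp ->] := eff_res_potential u v.
have := energy_ge0 (fun x y => f x y - (p x - p y)).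
by rewrite (energy_sub_grad hf hp) subr_ge0.
Qed.

Lemma eff_res_eq_energy u v f : unit_flow u v f -> energy f = 2 * eff_res e R u v ->
  exists p : T -> R, forall x y, e x y -> f x y = p x - p y.
Proof.
move=> hf; have [p hp ->] := eff_res_potential u v => Ef.
exists p => x y exy; apply/eqP; rewrite -subr_eq0; apply/eqP.
apply: (energy_eq0 (f := fun x y => f x y - (p x - p y))) exy.
by rewrite (energy_sub_grad hf hp) Ef subrr.
Qed.

End Connected.

Section TriangleFlow.
Hypothesis e_irr : irreflexive e.
Variables (u v : T) (a : R).
Hypothesis e_uv : e u v.
Local Notation C := (nbhd e u :&: nbhd e v).
Local Notation D := (u |: (v |: C)).
Hypothesis a_unit : a * (#|C|%:R / 2 + 1) = 1.

Definition triangle_pot (x : T) : R :=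
  if x == u then a else if x \in C then a / 2 else 0.

Definition triangle_flow (x y : T) : R :=
  if (x \in D) && (y \in D) then triangle_pot x - triangle_pot y else 0.

Let u_neq_v : u != v. Proof. by apply: contraTneq e_uv => ->; rewrite e_irr. Qed.
Let u_notin_C : u \notin C. Proof. by rewrite !inE e_irr. Qed.
Let v_notin_C : v \notin C. Proof. by rewrite !inE e_irr andbF. Qed.

Lemma triangle_pot_v : triangle_pot v = 0.
Proof. by rewrite /triangle_pot eq_sym (negbTE u_neq_v) (negbTE v_notin_C). Qed.

Lemma triangle_pot_C w : w \in C -> triangle_pot w = a / 2.
Proof.
move=> wC; have wu : w != u by apply: contraTneq wC => ->.
by rewrite /triangle_pot (negbTE wu) wC.
Qed.

Lemma triangle_flow_u y : e u y ->
  triangle_flow u y = a * (y == v)%:R + a / 2 * (y \in C)%:R.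
Proof.
move=> euy; rewrite /triangle_flow !in_setU1 eqxx /= /triangle_pot eqxx.
have [->|yv] := eqVneq y v.
  by rewrite (negbTE v_notin_C) eq_sym (negbTE u_neq_v) /=; ring.
have [yu|yu] := eqVneq y u; first by rewrite yu e_irr in euy.
by case: (y \in C) => /=; field.
Qed.

Lemma triangle_flow_v y : e v y ->
  triangle_flow v y = - (a * (y == u)%:R + a / 2 * (y \in C)%:R).
Proof.
move=> evy; rewrite /triangle_flow !in_setU1 eqxx orbT /= triangle_pot_v /triangle_pot.
have [yv|yv] := eqVneq y v; first by rewrite yv e_irr in evy.
have [->|yu] := eqVneq y u; first by rewrite (negbTE u_notin_C) /=; ring.
by case: (y \in C) => /=; field.
Qed.

Lemma triangle_flow_C w y : w \in C -> e w y ->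
  triangle_flow w y = a / 2 * ((y == v)%:R - (y == u)%:R).
Proof.
move=> wC ewy; rewrite /triangle_flow !in_setU1 wC !orbT /= (triangle_pot_C wC).
rewrite /triangle_pot; have [->|yu] := eqVneq y u.
  by rewrite (negbTE u_neq_v) /=; field.
have [->|yv] := eqVneq y v; first by rewrite (negbTE v_notin_C) /=; field.
by case: (y \in C) => /=; field.
Qed.

Lemma triangle_flow_unit : unit_flow u v triangle_flow.
Proof.
split=> [x y | x].
  by rewrite /triangle_flow andbC; case: ifP; rewrite ?opprB ?oppr0.
have [->|xu] := eqVneq x u.
  rewrite (eq_bigr _ triangle_flow_u) big_split /= -!mulr_sumr sumr_pred_delta e_uv.
  rewrite sumr_pred_indicator => [|y]; last by rewrite !inE => /andP [].
  by rewrite (negbTE u_neq_v) /= !mulr1n mulr0n subr0 -[RHS]a_unit; ring.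
have [->|xv] := eqVneq x v.
  rewrite (eq_bigr _ triangle_flow_v) sumrN big_split /= -!mulr_sumr.
  rewrite sumr_pred_delta (e_sym v u) e_uv.
  rewrite sumr_pred_indicator => [|y]; last by rewrite !inE => /andP [].
  by rewrite /= !mulr1n mulr0n sub0r -[in RHS]a_unit; ring.
have [xC|xC] := boolP (x \in C).
  rewrite (eq_bigr _ (fun y => triangle_flow_C xC (y := y))) -mulr_sumr sumrB.
  rewrite !sumr_pred_delta.
  move: xC; rewrite !inE (e_sym x u) (e_sym x v) => /andP [-> ->].
  by rewrite !subrr mulr0.
rewrite big1 => [|y _]; first by rewrite subrr.
by rewrite /triangle_flow !in_setU1 (negbTE xu) (negbTE xv) (negbTE xC).
Qed.

Lemma triangle_flow_energy : energy triangle_flow = 2 * a.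
Proof.
rewrite (energy_grad_on_support (q := triangle_pot) triangle_flow_unit) => [|x y _].
  by rewrite triangle_pot_v /triangle_pot eqxx subr0.
by rewrite /triangle_flow; case: ifP; [right | left].
Qed.

Lemma triangle_flow_not_grad (S : {set T}) x : e u x -> x != v -> ~~ e v x ->
  connect (induced_rel e (S :\ u)) x v ->
  ~ exists p : T -> R, forall y z, e y z -> triangle_flow y z = p y - p z.
Proof.
move=> eux xv nevx path_xv [p grad_p].
have a_neq0 : a != 0.
  by apply/eqP => a0; move: a_unit; rewrite a0 mul0r => /eqP; rewrite eq_sym oner_eq0.
have grad_u y : e u y -> p u - p y = a * (y == v)%:R + a / 2 * (y \in C)%:R.
  by move=> euy; rewrite -grad_p // triangle_flow_u.
have pv_neq : p v != p u.
  apply/eqP => pvu; move/eqP: a_neq0; apply; have := grad_u v e_uv.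
  by rewrite pvu subrr eqxx (negbTE v_notin_C) /= mulr1n mulr0n; lra.
have pC_neq w : w \in C -> p w != p u.
  move=> wC; apply/eqP => pwu; move/eqP: a_neq0; apply.
  have wv : (w == v) = false by apply: contraTF wC => /eqP ->.
  have euw : e u w by move: wC; rewrite !inE => /andP [].
  by have := grad_u w euw; rewrite pwu subrr wv wC /= mulr0n mulr1n; lra.
have px : p x == p u.
  have xC : (x \in C) = false by rewrite !inE (negbTE nevx) andbF.
  have := grad_u x eux; rewrite (negbTE xv) xC /= mulr0n !mulr0 addr0.
  by move/eqP; rewrite subr_eq0 eq_sym.
have step y z : induced_rel e (S :\ u) y z -> p y == p u -> p z == p u.
  case/and3P => eyz; rewrite !in_setD1 => /andP [yu _] _ py.
  have yv : y != v by apply: contraTneq py => ->.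
  have yC : y \notin C by apply: contraTN py; exact: pC_neq.
  move: (grad_p y z eyz); rewrite /triangle_flow !in_setU1 (negbTE yu) (negbTE yv).
  by rewrite (negbTE yC) /= => /eqP; rewrite eq_sym subr_eq0 => /eqP <-.
have [y [z [yz py nPz]]] :=
  connect_cross (P := fun z => p z == p u) path_xv px pv_neq.
by rewrite (step y z yz py) in nPz.
Qed.

End TriangleFlow.
End Network.

Lemma mulV_half_succ (R : realFieldType) (c : nat) :
  1 / (c%:R / 2 + 1) * (c%:R / 2 + 1) = 1 :> R.
Proof.
have pos : 0 < c%:R / 2 + 1 :> R by have := ler0n R c; lra.
by rewrite mul1r mulVf // lt0r_neq0.
Qed.

Unset Implicit Arguments.

Theorem mainTheorem5 (R : realFieldType) (T : finType) (e : rel T)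
  (e_sym : symmetric e) (e_irr : irreflexive e)
  (G_conn : graph_connected e) :
  (forall u v : T, e u v ->
     eff_res e R u v <=
       1 / ((#|nbhd e u :&: nbhd e v|)%:R / 2 + 1))
  /\
  ((exists S : {set T}, is_block e S /\ ~ is_clique e S) ->
   exists u v : T, e u v /\
     eff_res e R u v <
       1 / ((#|nbhd e u :&: nbhd e v|)%:R / 2 + 1)).
Proof.
pose a u v : R := 1 / ((#|nbhd e u :&: nbhd e v|)%:R / 2 + 1).
have flow_unit u v (e_uv : e u v) :=
  triangle_flow_unit e_sym e_irr e_uv (mulV_half_succ R _).
have flow_energy u v (e_uv : e u v) :=
  triangle_flow_energy e_sym e_irr e_uv (mulV_half_succ R _).
have bound u v : e u v -> eff_res e R u v <= a u v.
  move=> e_uv; have := eff_res_le_energy e_sym G_conn (flow_unit u v e_uv).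
  by rewrite /a (flow_energy u v e_uv) => le2; lra.
split=> [// | [S [[S_bic _] S_ncl]]].
have [u [v [x [e_uv e_ux xv nevx path_xv]]]] :=
  biconnected_nonclique_wedge e_sym e_irr S_bic S_ncl.
exists u, v; split=> //; rewrite lt_neqAle bound // andbT; apply/eqP => tight.
apply: (triangle_flow_not_grad e_irr e_uv (mulV_half_succ R _)
          e_ux xv nevx path_xv).
apply: (eff_res_eq_energy e_sym G_conn (flow_unit u v e_uv)).
by rewrite (flow_energy u v e_uv) tight.
Qed.
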